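(* For any join doctrine $\Phi$, we have $\omega\in\Phi$ if and only if $\omega\notin\Phi^*$.
   Context: A join doctrine is a class $\Phi$ of posets such that: (1) the one-element poset is in $\Phi$; (2) if a poset $P$ is the union of a set $\mathcal{S}$ of subposets each in $\Phi$ and $\mathcal{S}$ (ordered by inclusion) is in $\Phi$, then $P\in\Phi$; (3) if $f:P\to Q$ is monotone with cofinal image and $P\in\Phi$ then $Q\in\Phi$; (4) cofinal subposets of members of $\Phi$ are in $\Phi$. $\omega$ = natural numbers with usual order. $\Phi^*$ is the class of posets $\psi$ such that whenever $\psi=\bigcup\mathcal{S}$ for a set $\mathcal{S}$ of lower subsets of $\psi$ with $\mathcal{S}$ (ordered by inclusion) belonging to $\Phi$, some member of $\mathcal{S}$ equals $\psi$ (i.e. $\psi$ is a $\Phi$-compact element of the lattice of lower subsets of $\psi$). *)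

From Stdlib Require Import Arith FunctionalExtensionality PropExtensionality ProofIrrelevance.

Record poset := Poset {
  carrier :> Type;
  le : carrier -> carrier -> Prop;
  le_refl : forall x, le x x;
  le_trans : forall x y z, le x y -> le y z -> le x z;
  le_antisym : forall x y, le x y -> le y x -> x = y
}.

Arguments le {p} _ _.

Definition poset_class := poset -> Prop.

Definition one_poset : poset :=
  @Poset unit (fun _ _ => True) (fun _ => I) (fun _ _ _ _ _ => I)
    (fun x y _ _ => match x, y with tt, tt => eq_refl end).

Definition omega : poset :=
  @Poset nat Peano.le Nat.le_refl Nat.le_trans Nat.le_antisymm.

Definition subposet (P : poset) (A : P -> Prop) : poset.
Proof.
  refine (@Poset {x : P | A x} (fun x y => le (proj1_sig x) (proj1_sig y)) _ _ _).
  - intros x; apply le_refl.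
  - intros x y z; apply le_trans.
  - intros [x hx] [y hy] h1 h2; simpl in *.
    pose proof (le_antisym _ x y h1 h2) as e; subst y.
    f_equal; apply proof_irrelevance.
Defined.

Definition incl_poset (P : poset) (S : (P -> Prop) -> Prop) : poset.
Proof.
  refine (@Poset {A : P -> Prop | S A}
            (fun A B => forall x, proj1_sig A x -> proj1_sig B x) _ _ _).
  - intros A x h; exact h.
  - intros A B C h1 h2 x h; apply h2, h1, h.
  - intros [A hA] [B hB] h1 h2; simpl in *.
    assert (e : A = B).
    { apply functional_extensionality; intro x;
      apply propositional_extensionality; split; auto. }
    subst B; f_equal; apply proof_irrelevance.
Defined.

Definition monotone {P Q : poset} (f : P -> Q) : Prop :=
  forall x y, le x y -> le (f x) (f y).

Definition cofinal_image {P Q : poset} (f : P -> Q) : Prop :=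
  forall q : Q, exists p : P, le q (f p).

Definition cofinal_subset (P : poset) (A : P -> Prop) : Prop :=
  forall x : P, exists a, A a /\ le x a.

Definition lower_subset (P : poset) (A : P -> Prop) : Prop :=
  forall x y : P, A x -> le y x -> A y.

Definition join_doctrine (Phi : poset_class) : Prop :=
  Phi one_poset /\
  (forall (P : poset) (S : (P -> Prop) -> Prop),
      (forall x : P, exists A, S A /\ A x) ->
      (forall A, S A -> Phi (subposet P A)) ->
      Phi (incl_poset P S) ->
      Phi P) /\
  (forall (P Q : poset) (f : P -> Q),
      monotone f -> cofinal_image f -> Phi P -> Phi Q) /\
  (forall (P : poset) (A : P -> Prop),
      cofinal_subset P A -> Phi P -> Phi (subposet P A)).

(* Phi^* : posets psi that are Phi-compact in their lattice of lower sets. *)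
Definition dual_class (Phi : poset_class) : poset_class :=
  fun psi =>
    forall S : (psi -> Prop) -> Prop,
      (forall A, S A -> lower_subset psi A) ->
      (forall x : psi, exists A, S A /\ A x) ->
      Phi (incl_poset psi S) ->
      exists A, S A /\ forall x : psi, A x.

From Stdlib Require Import Arith Lia Classical ClassicalEpsilon.
From Stdlib Require Import FunctionalExtensionality PropExtensionality.

(* The initial segments
   [0, n) of omega are an image of omega and cover it without any of them being
   all of omega, so omega in Phi excludes omega in Phi^*.  Conversely every proper
   lower subset of omega is some [0, n), so a Phi-indexed cover of omega by proper
   lower subsets maps monotonically and cofinally onto omega via A |-> n. *)

Definition segment (n : nat) : omega -> Prop := fun k => k < n.

Definition segments (A : omega -> Prop) : Prop := exists n, A = segment n.

Lemma lower_subset_segment (n : nat) : lower_subset omega (segment n).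
Proof. intros x y Hx Hyx; unfold segment in *; simpl in *; lia. Qed.

Lemma segment_incl_le (m n : nat) :
  (forall k, segment m k -> segment n k) -> m <= n.
Proof.
  intros Hmn; destruct (le_lt_dec m n) as [Hle | Hlt]; [exact Hle |].
  specialize (Hmn n Hlt); unfold segment in Hmn; lia.
Qed.

Lemma lower_subset_nat_iff_lt (A : omega -> Prop) (m : nat) :
  lower_subset omega A -> ~ A m -> exists n, forall k, A k <-> k < n.
Proof.
  intros HA; induction m as [| m IH]; intros Hm.
  - exists 0; intros k; split; [| lia].
    intros Hk; elim Hm; apply (HA k); [exact Hk | simpl; lia].
  - destruct (classic (A m)) as [Am | nAm]; [| exact (IH nAm)].
    exists (S m); intros k; split.
    + intros Hk; destruct (le_lt_dec (S m) k) as [Hle | Hlt]; [| exact Hlt].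
      elim Hm; exact (HA k (S m) Hk Hle).
    + intros Hk; apply (HA m); [exact Am | simpl; lia].
Qed.

Lemma proper_lower_subset_segment (A : omega -> Prop) :
  lower_subset omega A -> ~ (forall k, A k) -> segments A.
Proof.
  intros HA Hproper.
  destruct (not_all_ex_not _ _ Hproper) as [m Hm].
  destruct (lower_subset_nat_iff_lt A m HA Hm) as [n Hn].
  exists n; apply functional_extensionality; intros k.
  apply propositional_extensionality; exact (Hn k).
Qed.

Definition segment_of (n : omega) : incl_poset omega segments :=
  exist segments (segment n) (ex_intro _ n eq_refl).

Lemma segment_of_monotone_cofinal : monotone segment_of /\ cofinal_image segment_of.
Proof.
  split.
  - intros m n Hmn k Hk; unfold segment_of, segment in *; simpl in *; lia.
  - intros [A [n ->]]; exists n; intros k Hk; exact Hk.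
Qed.

Lemma segment_length (S : (omega -> Prop) -> Prop) :
  (forall A, S A -> segments A) ->
  exists len : incl_poset omega S -> omega,
    forall A, proj1_sig A = segment (len A).
Proof.
  intros HS.
  exists (fun A => proj1_sig (constructive_indefinite_description _
                                 (HS _ (proj2_sig A)))).
  intros A; destruct (constructive_indefinite_description _ _); exact e.
Qed.

Lemma segment_length_monotone_cofinal (S : (omega -> Prop) -> Prop)
    (len : incl_poset omega S -> omega) :
  (forall A, proj1_sig A = segment (len A)) ->
  (forall k : omega, exists A, S A /\ A k) ->
  monotone len /\ cofinal_image len.
Proof.
  intros Hlen Hcover; split.
  - intros A B HAB; apply segment_incl_le.
    rewrite <- !Hlen; exact HAB.
  - intros k; destruct (Hcover k) as [A [HA Ak]].
    exists (exist S A HA).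
    assert (Hk : segment (len (exist S A HA)) k) by (rewrite <- Hlen; exact Ak).
    unfold segment in Hk; change (k <= len (exist S A HA)); lia.
Qed.

Section CofinalImageClosed.

Variable Phi : poset_class.

Hypothesis Phi_image : forall (P Q : poset) (f : P -> Q),
  monotone f -> cofinal_image f -> Phi P -> Phi Q.

Lemma omega_not_dual : Phi omega -> ~ dual_class Phi omega.
Proof.
  intros Homega Hdual.
  destruct segment_of_monotone_cofinal as [Hmono Hcof].
  destruct (Hdual segments) as [A [[n ->] Hall]].
  - intros A [n ->]; apply lower_subset_segment.
  - intros k; exists (segment (S k)); split; [exists (S k); reflexivity |].
    unfold segment; simpl; lia.
  - exact (Phi_image _ _ _ Hmono Hcof Homega).
  - specialize (Hall n); unfold segment in Hall; lia.
Qed.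

Lemma omega_of_not_dual : ~ dual_class Phi omega -> Phi omega.
Proof.
  intros Hnot; apply NNPP; intros Homega; apply Hnot.
  intros S Hlower Hcover HS; apply NNPP; intros Hnone.
  assert (Hseg : forall A, S A -> segments A).
  { intros A HA; apply proper_lower_subset_segment; [exact (Hlower A HA) |].
    intros Hall; apply Hnone; exists A; split; assumption. }
  destruct (segment_length S Hseg) as [len Hlen].
  destruct (segment_length_monotone_cofinal S len Hlen Hcover) as [Hmono Hcof].
  exact (Homega (Phi_image _ _ _ Hmono Hcof HS)).
Qed.

End CofinalImageClosed.

Theorem lemma3p6 (Phi : poset_class) :
  join_doctrine Phi -> (Phi omega <-> ~ dual_class Phi omega).
Proof.
  intros [_ [_ [Phi_image _]]]; split.
  - exact (omega_not_dual Phi Phi_image).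
  - exact (omega_of_not_dual Phi Phi_image).
Qed.
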